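(* Let $X$ be a locale with frame presentation $\mathcal{O}X=\langle G\mid R\rangle$, and regard $\mathcal{O}X$ as the locale whose frame is the Scott topology on the complete lattice $\mathcal{O}X$. If there exists a semi-open quotient locale map $e\colon\Sigma^{\Sigma^G}\to\mathcal{O}X$, then $X$ is locally compact (equivalently, $\mathcal{O}X$ is a continuous dcpo).
   Context: Frames are complete lattices with finite meets distributing over arbitrary joins; a locale $X$ is a frame $\mathcal{O}X$ and a locale map $f\colon X\to Y$ is a frame homomorphism $f^*\colon\mathcal{O}Y\to\mathcal{O}X$. $\Sigma$ is the Sierpiński locale; for a set $G$, $\Sigma^G$ is the locale whose frame is the free frame on $G$, and $\Sigma^{\Sigma^G}$ is its exponential (the locale of Scott opens of the free frame on $G$). A presentation $\mathcal{O}X=\langle G\mid R\rangle$ means $\mathcal{O}X$ is the quotient of the free frame on $G$ by the congruence generated by $R$. Scott topology: $V$ open iff upward closed and whenever the join of a directed set lies in $V$, some member does. A locale map $e\colon Y\to Z$ is a semi-open quotient if $e^*$ has a suplattice retraction, i.e. a map $r\colon\mathcal{O}Y\to\mathcal{O}Z$ preserving arbitrary joins with $r\circ e^*=\mathrm{id}$. Way-below: $a\ll b$ iff whenever $b\le\bigvee D$ with $D$ directed, $a\le d$ for some $d\in D$; a dcpo is continuous if each $b$ is the directed join of $\{a\mid a\ll b\}$. A locale $X$ is locally compact iff $\mathcal{O}X$ is continuous. *)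

From Stdlib Require Import List FunctionalExtensionality PropExtensionality ProofIrrelevance.
Set Implicit Arguments.

Definition image {A B : Type} (f : A -> B) (S : A -> Prop) : B -> Prop :=
  fun y => exists x, S x /\ y = f x.

Record frame := Frame {
  fcar :> Type;
  fle : fcar -> fcar -> Prop;
  fjoin : (fcar -> Prop) -> fcar;
  fmeet : fcar -> fcar -> fcar;
  ftop : fcar;
  fle_refl : forall x, fle x x;
  fle_trans : forall x y z, fle x y -> fle y z -> fle x z;
  fle_antisym : forall x y, fle x y -> fle y x -> x = y;
  fjoin_ub : forall S x, S x -> fle x (fjoin S);
  fjoin_least : forall S y, (forall x, S x -> fle x y) -> fle (fjoin S) y;
  fmeet_lb1 : forall x y, fle (fmeet x y) x;
  fmeet_lb2 : forall x y, fle (fmeet x y) y;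
  fmeet_glb : forall x y z, fle z x -> fle z y -> fle z (fmeet x y);
  ftop_max : forall x, fle x ftop;
  fdistr : forall a S, fmeet a (fjoin S) = fjoin (image (fmeet a) S)
}.
Arguments fle {f} _ _.
Arguments fjoin {f} _.
Arguments fmeet {f} _ _.
Arguments ftop {f}.

Definition frame_hom {A B : frame} (f : A -> B) : Prop :=
  (forall x y, f (fmeet x y) = fmeet (f x) (f y)) /\
  f ftop = ftop /\
  (forall S, f (fjoin S) = fjoin (image f S)).

Definition preserves_joins {A B : frame} (f : A -> B) : Prop :=
  forall S, f (fjoin S) = fjoin (image f S).

(** A locale map e : Y -> Z, given by e^* : OZ -> OY, is a semi-open quotient
    if e^* has a suplattice retraction r (r o e^* = id). *)
Definition semi_open_quotient {Z Y : frame} (estar : Z -> Y) : Prop :=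
  frame_hom estar /\
  exists r : Y -> Z, preserves_joins r /\ forall z, r (estar z) = z.

Definition directed {L : frame} (D : L -> Prop) : Prop :=
  (exists d, D d) /\
  (forall x y, D x -> D y -> exists z, D z /\ fle x z /\ fle y z).

Definition scott_open (L : frame) (U : L -> Prop) : Prop :=
  (forall x y, U x -> fle x y -> U y) /\
  (forall D, directed D -> U (fjoin D) -> exists d, D d /\ U d).

Definition way_below {L : frame} (a b : L) : Prop :=
  forall D, directed D -> fle b (fjoin D) -> exists d, D d /\ fle a d.

Definition continuous_frame (L : frame) : Prop :=
  forall b : L, directed (fun a => way_below a b) /\
                b = fjoin (fun a => way_below a b).

(** A locale X (given by its frame OX) is locally compact iff OX is continuous. *)
Definition locally_compact (X : frame) : Prop := continuous_frame X.

Section Scott.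
Variable L : frame.

Definition sopen := {U : L -> Prop | scott_open L U}.

Lemma sopen_ext (U V : sopen) :
  (forall x, proj1_sig U x <-> proj1_sig V x) -> U = V.
Proof.
destruct U as [U HU], V as [V HV]; simpl; intros H.
assert (E : U = V).
{ apply functional_extensionality; intro x; apply propositional_extensionality; auto. }
subst V; f_equal; apply proof_irrelevance.
Qed.

Definition sle (U V : sopen) : Prop := forall x, proj1_sig U x -> proj1_sig V x.

Lemma sunion_open (S : sopen -> Prop) :
  scott_open L (fun x => exists U, S U /\ proj1_sig U x).
Proof.
split.
- intros x y [U [SU Ux]] Hle; exists U; split; auto.
  destruct U as [U [Hu Hd]]; simpl in *; eauto.
- intros D dD [U [SU Ux]].
  pose proof (proj2 (proj2_sig U) D dD Ux) as [d [Dd Ud]].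
  exists d; split; auto. exists U; auto.
Qed.

Definition sjoin (S : sopen -> Prop) : sopen := exist _ _ (sunion_open S).

Lemma sinter_open (U V : sopen) :
  scott_open L (fun x => proj1_sig U x /\ proj1_sig V x).
Proof.
destruct U as [U [Hu Hd]], V as [V [Hv He]]; simpl; split.
- intros x y [Ux Vx] Hle; split; eauto.
- intros D dD [UD VD].
  destruct (Hd D dD UD) as [d1 [D1 U1]].
  destruct (He D dD VD) as [d2 [D2 V2]].
  destruct dD as [_ dD].
  destruct (dD d1 d2 D1 D2) as [z [Dz [l1 l2]]].
  exists z; split; [assumption | split; eauto].
Qed.

Definition smeet (U V : sopen) : sopen := exist _ _ (sinter_open U V).

Lemma stop_open : scott_open L (fun _ => True).
Proof.
split; auto. intros D [[d Dd] _] _; exists d; auto.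
Qed.

Definition stop : sopen := exist _ _ stop_open.

Definition scott_frame : frame.
Proof.
refine (@Frame sopen sle sjoin smeet stop _ _ _ _ _ _ _ _ _ _);
  unfold sle; simpl.
- auto.
- auto.
- intros x y H1 H2; apply sopen_ext; split; auto.
- intros S x Sx y Hy; exists x; auto.
- intros S y H x [U [SU Ux]]; exact (H U SU x Ux).
- intros x y z [H _]; exact H.
- intros x y z [_ H]; exact H.
- intros x y z H1 H2 w Hw; split; auto.
- auto.
- intros a S; apply sopen_ext; intros x; simpl; split.
  + intros [ax [U [SU Ux]]]. exists (smeet a U); split.
    * exists U; auto.
    * simpl; auto.
  + intros [W [[U [SU ->]] Wx]]; simpl in Wx; destruct Wx as [ax Ux].
    split; auto; exists U; auto.
Defined.
End Scott.

(** Realised as the downsets of the free meet-semilattice (finite subsets of G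
    under reverse inclusion), i.e. the families of finite subsets of G (coded as
    lists) that are upward closed under inclusion of their elements.  The
    generator g corresponds to {s | In g s}. *)
Section Free.
Variable G : Type.

Definition upclosed (U : list G -> Prop) : Prop :=
  forall s t, U s -> incl s t -> U t.

Definition fopen := {U : list G -> Prop | upclosed U}.

Lemma fopen_ext (U V : fopen) :
  (forall x, proj1_sig U x <-> proj1_sig V x) -> U = V.
Proof.
destruct U as [U HU], V as [V HV]; simpl; intros H.
assert (E : U = V).
{ apply functional_extensionality; intro x; apply propositional_extensionality; auto. }
subst V; f_equal; apply proof_irrelevance.
Qed.

Definition fle' (U V : fopen) : Prop := forall x, proj1_sig U x -> proj1_sig V x.

Lemma funion_up (S : fopen -> Prop) :
  upclosed (fun x => exists U, S U /\ proj1_sig U x).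
Proof.
intros s t [U [SU Us]] H; exists U; split; auto.
destruct U as [U HU]; simpl in *; eauto.
Qed.

Definition fjoin' (S : fopen -> Prop) : fopen := exist _ _ (funion_up S).

Lemma finter_up (U V : fopen) :
  upclosed (fun x => proj1_sig U x /\ proj1_sig V x).
Proof.
destruct U as [U HU], V as [V HV]; simpl; intros s t [Us Vs] H; split; eauto.
Qed.

Definition fmeet' (U V : fopen) : fopen := exist _ _ (finter_up U V).

Lemma ftop_up : upclosed (fun _ => True).
Proof. intros s t _ _; exact I. Qed.

Definition ftop' : fopen := exist _ _ ftop_up.

Definition free_frame : frame.
Proof.
refine (@Frame fopen fle' fjoin' fmeet' ftop' _ _ _ _ _ _ _ _ _ _);
  unfold fle'; simpl.
- auto.
- auto.
- intros x y H1 H2; apply fopen_ext; split; auto.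
- intros S x Sx y Hy; exists x; auto.
- intros S y H x [U [SU Ux]]; exact (H U SU x Ux).
- intros x y z [H _]; exact H.
- intros x y z [_ H]; exact H.
- intros x y z H1 H2 w Hw; split; auto.
- auto.
- intros a S; apply fopen_ext; intros x; simpl; split.
  + intros [ax [U [SU Ux]]]. exists (fmeet' a U); split.
    * exists U; auto.
    * simpl; auto.
  + intros [W [[U [SU ->]] Wx]]; simpl in Wx; destruct Wx as [ax Ux].
    split; auto; exists U; auto.
Defined.

Lemma gen_up (g : G) : upclosed (fun s => In g s).
Proof. intros s t H Hi; auto. Qed.
Definition free_gen (g : G) : free_frame := exist _ _ (gen_up g).
End Free.

Definition frame_congruence {F : frame} (C : F -> F -> Prop) : Prop :=
  (forall x, C x x) /\
  (forall x y, C x y -> C y x) /\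
  (forall x y z, C x y -> C y z -> C x z) /\
  (forall a b a' b', C a b -> C a' b' -> C (fmeet a a') (fmeet b b')) /\
  (forall (I : Type) (f g : I -> F), (forall i, C (f i) (g i)) ->
     C (fjoin (fun y => exists i, y = f i)) (fjoin (fun y => exists i, y = g i))).

(** OX = < G | R > : OX is (isomorphic, via a surjective frame homomorphism q
    from the free frame on G) to the quotient of the free frame on G by the
    frame congruence generated by the relations R. *)
Definition presented_by (X : frame) (G : Type)
    (R : free_frame G -> free_frame G -> Prop) : Prop :=
  exists q : free_frame G -> X,
    frame_hom q /\
    (forall x : X, exists a, q a = x) /\
    (forall a b, q a = q b <->
       (forall C, frame_congruence C -> (forall u v, R u v -> C u v) -> C a b)).
Arguments presented_by X G R : clear implicits.

From Stdlib Require Import List Classical.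

(* The Scott topology of an algebraic lattice such as the free frame is
   supercontinuous (completely distributive): a Scott open W is the union of
   the principal upsets of the compact elements it contains, and each such
   upset is totally below W.  Supercontinuity passes to retracts along
   join-preserving maps, so the Scott topology of OX is supercontinuous.
   Finally, if b were not below c, the join of the elements way below b, then
   b would have a Scott neighbourhood V totally below the complement of the
   downset of c; a lower bound of V outside that downset exists and is way
   below b, which is absurd. *)

Definition fjoin2 {L : frame} (x y : L) : L := fjoin (fun w => w = x \/ w = y).

Lemma fjoin2_ub_l {L : frame} (x y : L) : fle x (fjoin2 x y).
Proof. apply fjoin_ub; left; reflexivity. Qed.

Lemma fjoin2_ub_r {L : frame} (x y : L) : fle y (fjoin2 x y).
Proof. apply fjoin_ub; right; reflexivity. Qed.

Lemma fjoin2_least {L : frame} (x y z : L) :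
  fle x z -> fle y z -> fle (fjoin2 x y) z.
Proof. intros Hx Hy; apply fjoin_least; intros w [-> | ->]; assumption. Qed.

Lemma preserves_joins_monotone {A B : frame} {f : A -> B} :
  preserves_joins f -> forall x y, fle x y -> fle (f x) (f y).
Proof.
intros Hf x y Hxy.
assert (Exy : fjoin2 x y = y).
{ apply fle_antisym; [apply fjoin2_least; [exact Hxy | apply fle_refl] | apply fjoin2_ub_r]. }
rewrite <- Exy; unfold fjoin2; rewrite Hf.
apply fjoin_ub; exists x; split; [left |]; reflexivity.
Qed.

Lemma way_below_fle {L : frame} (a b : L) : way_below a b -> fle a b.
Proof.
intros Hab.
assert (Hb : directed (fun w => w = b)).
{ split; [exists b; reflexivity |].
  intros x y -> ->; exists b; split; [reflexivity | split; apply fle_refl]. }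
destruct (Hab _ Hb (fjoin_ub _ _ _ eq_refl)) as [d [-> Had]]; exact Had.
Qed.

Lemma way_below_bot {L : frame} (b : L) : way_below (fjoin (fun _ => False)) b.
Proof.
intros D [[d Dd] _] _; exists d; split; [exact Dd | apply fjoin_least; intros x []].
Qed.

Lemma way_below_join2 {L : frame} (x y b : L) :
  way_below x b -> way_below y b -> way_below (fjoin2 x y) b.
Proof.
intros Hx Hy D HD Hb.
destruct (Hx D HD Hb) as [dx [Dx Hxd]], (Hy D HD Hb) as [dy [Dy Hyd]].
destruct (proj2 HD dx dy Dx Dy) as [d [Dd [Hdx Hdy]]].
exists d; split; [exact Dd | apply fjoin2_least; eapply fle_trans; eassumption].
Qed.

Lemma way_below_directed {L : frame} (b : L) : directed (fun a => way_below a b).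
Proof.
split; [exists (fjoin (fun _ => False)); apply way_below_bot |].
intros x y Hx Hy; exists (fjoin2 x y).
split; [apply way_below_join2; assumption | split; [apply fjoin2_ub_l | apply fjoin2_ub_r]].
Qed.

Lemma way_below_of_scott_nbhd {L : frame} {V : L -> Prop} {a b : L} :
  scott_open L V -> V b -> (forall x, V x -> fle a x) -> way_below a b.
Proof.
intros [Vup Vdir] Vb Ha D HD Hb.
destruct (Vdir D HD (Vup _ _ Vb Hb)) as [d [Dd Vd]].
exists d; split; [exact Dd | exact (Ha d Vd)].
Qed.

Definition compact {L : frame} (k : L) : Prop := way_below k k.

Definition algebraic (L : frame) : Prop :=
  forall x : L, exists D, directed D /\ (forall k, D k -> compact k) /\ x = fjoin D.

Definition totally_below {L : frame} (x y : L) : Prop :=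
  forall S, fle y (fjoin S) -> exists s, S s /\ fle x s.

Definition supercontinuous (L : frame) : Prop :=
  forall y : L, fle y (fjoin (fun x => totally_below x y)).

Lemma supercontinuous_retract {Z Y : frame} {e : Z -> Y} {r : Y -> Z} :
  preserves_joins e -> preserves_joins r -> (forall z, r (e z) = z) ->
  supercontinuous Y -> supercontinuous Z.
Proof.
intros He Hr Hre HY z.
assert (Htb : forall y, totally_below y (e z) -> totally_below (r y) z).
{ intros y Hy S HS.
  assert (HeS : fle (e z) (fjoin (image e S))).
  { rewrite <- (He S); exact (preserves_joins_monotone He _ _ HS). }
  destruct (Hy _ HeS) as [s' [[s [Ss ->]] Hys]].
  exists s; split; [exact Ss |].
  rewrite <- (Hre s); exact (preserves_joins_monotone Hr _ _ Hys). }
rewrite <- (Hre z) at 1.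
eapply fle_trans; [exact (preserves_joins_monotone Hr _ _ (HY (e z))) |].
rewrite (Hr (fun x => totally_below x (e z))); apply fjoin_least; intros x [y [Hy ->]].
apply fjoin_ub; exact (Htb y Hy).
Qed.

Section ScottTopology.
Variable L : frame.

Lemma scott_open_up_compact (k : L) : compact k -> scott_open L (fle k).
Proof.
intros Hk; split; [intros x y Hkx Hxy; eapply fle_trans; eassumption | exact Hk].
Qed.

Definition up_compact {k : L} (Hk : compact k) : scott_frame L :=
  exist _ (fle k) (scott_open_up_compact k Hk).

Lemma up_compact_totally_below {k : L} (Hk : compact k) {W : scott_frame L} :
  proj1_sig W k -> totally_below (up_compact Hk) W.
Proof.
intros Wk S HS.
destruct (HS k Wk) as [U [SU Uk]].
exists U; split; [exact SU |].
intros x Hkx; exact (proj1 (proj2_sig U) k x Uk Hkx).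
Qed.

Lemma scott_supercontinuous_of_algebraic :
  algebraic L -> supercontinuous (scott_frame L).
Proof.
intros HL W s Ws.
destruct (HL s) as [D [HD [Dc ->]]].
destruct (proj2 (proj2_sig W) D HD Ws) as [k [Dk Wk]].
exists (up_compact (Dc k Dk)); split.
- exact (up_compact_totally_below (Dc k Dk) Wk).
- exact (fjoin_ub _ D k Dk).
Qed.

Lemma scott_open_not_below (v : L) : scott_open L (fun x => ~ fle x v).
Proof.
split.
- intros x y Hxv Hxy Hyv; apply Hxv; eapply fle_trans; eassumption.
- intros D _ HDv; apply NNPP; intros Hno; apply HDv, fjoin_least.
  intros x Dx; apply NNPP; intros Hxv; apply Hno; exists x; split; assumption.
Qed.

Definition not_below (v : L) : scott_frame L := exist _ _ (scott_open_not_below v).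

(* Otherwise U is covered by the complements of the downsets of the points of
   V, and V would lie in one of them, i.e. outside the downset of one of its
   own points. *)
Lemma scott_totally_below_lower_bound {V U : scott_frame L} :
  totally_below V U -> exists a, proj1_sig U a /\ forall x, proj1_sig V x -> fle a x.
Proof.
intros HVU; apply NNPP; intros Hno.
set (S := fun O => exists v, proj1_sig V v /\ O = not_below v).
assert (HUS : fle U (fjoin S)).
{ intros a Ua.
  destruct (not_all_ex_not _ _ (fun Ha => Hno (ex_intro _ a (conj Ua Ha)))) as [v Hv].
  destruct (imply_to_and _ _ Hv) as [Vv Hav].
  exists (not_below v); split; [exists v; split; [exact Vv | reflexivity] | exact Hav]. }
destruct (HVU S HUS) as [O [[v [Vv ->]] HVv]].
exact (HVv v Vv (fle_refl _ v)).
Qed.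

Lemma continuous_of_scott_supercontinuous :
  supercontinuous (scott_frame L) -> continuous_frame L.
Proof.
intros HL b; split; [apply way_below_directed |].
apply fle_antisym; [| apply fjoin_least; intros a; apply way_below_fle].
set (c := fjoin (fun a => way_below a b)).
apply NNPP; intros Hbc.
destruct (HL (not_below c) b Hbc) as [V [HV Vb]].
destruct (scott_totally_below_lower_bound HV) as [a [Hac Ha]].
apply Hac, fjoin_ub.
exact (way_below_of_scott_nbhd (proj2_sig V) Vb Ha).
Qed.
End ScottTopology.

Section FreeFrame.
Variable G : Type.

Lemma fg_upclosed (Ls : list (list G)) :
  upclosed (fun t => exists l, In l Ls /\ incl l t).
Proof.
intros s t [l [Hl Hls]] Hst; exists l; split; [exact Hl | eapply incl_tran; eassumption].
Qed.

(* The join over [l] in [Ls] of the meets of the generators listed in [l]. *)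
Definition fg_open (Ls : list (list G)) : free_frame G := exist _ _ (fg_upclosed Ls).

Lemma directed_common_member (D : free_frame G -> Prop) (Ls : list (list G)) :
  directed D -> (forall l, In l Ls -> exists d, D d /\ proj1_sig d l) ->
  exists d, D d /\ forall l, In l Ls -> proj1_sig d l.
Proof.
intros HD; induction Ls as [| l0 Ls IH]; intros HLs.
- destruct (proj1 HD) as [d Dd]; exists d; split; [exact Dd | intros l []].
- destruct (HLs l0 (or_introl eq_refl)) as [d0 [D0 Hl0]].
  destruct IH as [d1 [D1 Hd1]]; [intros l Hl; apply HLs; right; exact Hl |].
  destruct (proj2 HD d0 d1 D0 D1) as [d [Dd [H0 H1]]].
  exists d; split; [exact Dd |].
  intros l [<- | Hl]; [apply H0; exact Hl0 | apply H1, Hd1, Hl].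
Qed.

Lemma fg_open_compact (Ls : list (list G)) : compact (fg_open Ls).
Proof.
intros D HD HLs.
destruct (@directed_common_member D Ls HD) as [d [Dd Hd]].
- intros l Hl.
  destruct (HLs l (ex_intro _ l (conj Hl (incl_refl l)))) as [U [DU Ul]].
  exists U; split; assumption.
- exists d; split; [exact Dd |].
  intros t [l [Hl Hlt]]; exact (proj2_sig d l t (Hd l Hl) Hlt).
Qed.

Lemma free_frame_algebraic : algebraic (free_frame G).
Proof.
intros x.
exists (fun k => exists Ls, (forall l, In l Ls -> proj1_sig x l) /\ k = fg_open Ls).
split; [split | split].
- exists (fg_open nil), nil; split; [intros l [] | reflexivity].
- intros y z [Ly [Hy ->]] [Lz [Hz ->]].
  exists (fg_open (Ly ++ Lz)); split; [| split].
  + exists (Ly ++ Lz); split; [| reflexivity].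
    intros l Hl; destruct (in_app_or _ _ _ Hl); auto.
  + intros t [l [Hl Hlt]]; exists l; split; [apply in_or_app; left |]; assumption.
  + intros t [l [Hl Hlt]]; exists l; split; [apply in_or_app; right |]; assumption.
- intros k [Ls [_ ->]]; apply fg_open_compact.
- apply fopen_ext; intros t; simpl; split.
  + intros Ht; exists (fg_open (t :: nil)); split.
    * exists (t :: nil); split; [intros l [<- | []]; exact Ht | reflexivity].
    * exists t; split; [left; reflexivity | apply incl_refl].
  + intros [U [[Ls [HLs ->]] [l [Hl Hlt]]]]; exact (proj2_sig x l t (HLs l Hl) Hlt).
Qed.
End FreeFrame.

Theorem proposition3p9 (X : frame) (G : Type)
    (R : free_frame G -> free_frame G -> Prop)
    (Hpres : presented_by X G R) :
  (exists estar : scott_frame X -> scott_frame (free_frame G),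
      semi_open_quotient estar) ->
  locally_compact X.
Proof.
intros [estar [[_ [_ Hjoins]] [r [Hr Hre]]]].
apply continuous_of_scott_supercontinuous.
apply (supercontinuous_retract Hjoins Hr Hre).
apply scott_supercontinuous_of_algebraic, free_frame_algebraic.
Qed.
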